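(* Let $X$ and $Y$ be objects of an $R$-linear triangulated category $\mathsf{T}$ with $\operatorname{Hom}^*_{\mathsf{T}}(X,Y)$ in $\mathsf{noeth}^{\mathsf{fl}}(R)$. Let $s=\operatorname{cx}(X,Y)$ and assume $e^s(X,Y)=0$. Then there exists an integer $m_0$ with the following property: if $\lambda^n(X,Y)=0$ for $d/2$ consecutive even values of $n\ge m_0$, or for $d/2$ consecutive odd values of $n\ge m_0$, then $\lambda^n(X,Y)=0$ for all $n\ge m_0$.
   Context: $R=\bigoplus_{n\ge 0}R^n$ is a graded-commutative Noetherian ring, generated over $R^0$ by $R^d$ for a fixed even integer $d\ge 2$ (standing assumption). $\mathsf{T}$ is a triangulated category with suspension $\Sigma$ which is $R$-linear: there is a graded ring homomorphism from $R$ to the graded center of $\mathsf{T}$ (degree-$n$ elements are natural transformations $\eta:\mathrm{id}\to\Sigma^n$ with $\eta\Sigma=(-1)^n\Sigma\eta$), making $\operatorname{Hom}^*_{\mathsf{T}}(X,Y)=\bigoplus_{n\in\mathbb{Z}}\operatorname{Hom}_{\mathsf{T}}(X,\Sigma^nY)$ a graded $R$-module. Set $\lambda^n(X,Y)=\ell_{R^0}\operatorname{Hom}_{\mathsf{T}}(X,\Sigma^nY)$. $\operatorname{Hom}^*_{\mathsf{T}}(X,Y)\in\mathsf{noeth}^{\mathsf{fl}}(R)$ means $\bigoplus_{n\ge n_0}\operatorname{Hom}_{\mathsf{T}}(X,\Sigma^nY)$ is Noetherian over $R$ for some $n_0$ and all $\lambda^n(X,Y)<\infty$. Hilbert polynomials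 $g_i\in\mathbb{Q}[t]$ satisfy $g_i(n)=\lambda^{dn+i}(X,Y)$ for $n\gg0$, $i=0,\dots,d-1$; $\operatorname{cx}(X,Y)=1+\max_i\deg g_i$ (zero polynomial has degree $-1$). $h(X,Y)(n)=\sum_{i=0}^{d-1}(-1)^{n+i}\lambda^{n+i}(X,Y)$; $\Delta^1f(n)=f(n+d)-f(n)$, $\Delta^0f=f$, $\Delta^sf=\Delta^1(\Delta^{s-1}f)$. For $s\ge\operatorname{cx}(X,Y)$: if $\operatorname{cx}(X,Y)\ge1$, $e^s(X,Y)=\Delta^{s-1}h(X,Y)(n)$ for $n\gg0$; if $\operatorname{cx}(X,Y)=0$ and $\lambda^n(X,Y)=0$ for $n\ll0$, $e^0(X,Y)=\sum_n(-1)^n\lambda^n(X,Y)$. *)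

From mathcomp Require Import all_boot all_order all_algebra.
Set Implicit Arguments. Unset Strict Implicit. Unset Printing Implicit Defensive.
Import Order.TTheory GRing.Theory Num.Theory.
Local Open Scope ring_scope.

Definition graded_ring (R : pzRingType) (Rd : nat -> R -> Prop) : Prop :=
  [/\ (forall n, Rd n 0),
      (forall n x y, Rd n x -> Rd n y -> Rd n (x - y)),
      Rd 0%N 1 &
      (forall m n x y, Rd m x -> Rd n y -> Rd (m + n)%N (x * y))] /\
  [/\
      (forall x : R, exists (N : nat) (c : nat -> R),
          (forall k, Rd k (c k)) /\ x = \sum_(k < N) c k) &
      (forall (N : nat) (c : nat -> R), (forall k, Rd k (c k)) ->
          \sum_(k < N) c k = 0 -> forall k, (k < N)%N -> c k = 0)].

Definition graded_commutative (R : pzRingType) (Rd : nat -> R -> Prop) : Prop :=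
  forall m n (x y : R), Rd m x -> Rd n y -> x * y = (-1) ^+ (m * n) * (y * x).

Definition left_ideal (R : pzRingType) (I : R -> Prop) : Prop :=
  [/\ I 0, (forall x y, I x -> I y -> I (x - y)) & (forall r x, I x -> I (r * x))].

Definition noetherian_ring (R : pzRingType) : Prop :=
  forall I : nat -> R -> Prop, (forall k, left_ideal (I k)) ->
    (forall k x, I k x -> I k.+1 x) ->
    exists N, forall k, (N <= k)%N -> forall x, I k x -> I N x.

Definition generated_in_degree (R : pzRingType) (Rd : nat -> R -> Prop) (d : nat) : Prop :=
  forall S : R -> Prop,
    (forall x y, S x -> S y -> S (x - y)) ->
    (forall x y, S x -> S y -> S (x * y)) ->
    (forall x, Rd 0%N x -> S x) -> (forall x, Rd d x -> S x) ->
    forall x, S x.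

Definition graded_module (R : pzRingType) (Rd : nat -> R -> Prop)
    (M : lmodType R) (Md : int -> M -> Prop) : Prop :=
  [/\ (forall n, Md n 0),
      (forall n x y, Md n x -> Md n y -> Md n (x - y)),
      (forall (k : nat) (n : int) r x, Rd k r -> Md n x -> Md (n + k%:Z) (r *: x)),
      (forall x : M, exists (a : int) (N : nat) (c : nat -> M),
          (forall i : nat, Md (a + i%:Z) (c i)) /\ x = \sum_(i < N) c i) &
      (forall (a : int) (N : nat) (c : nat -> M), (forall i : nat, Md (a + i%:Z) (c i)) ->
          \sum_(i < N) c i = 0 -> forall i, (i < N)%N -> c i = 0)].

Definition Mge (M : zmodType) (Md : int -> M -> Prop) (n0 : int) (x : M) : Prop :=
  exists (N : nat) (c : nat -> M),
    (forall i : nat, Md (n0 + i%:Z) (c i)) /\ x = \sum_(i < N) c i.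

Definition submodule (R : pzRingType) (M : lmodType R) (P : M -> Prop) : Prop :=
  [/\ P 0, (forall x y, P x -> P y -> P (x - y)) & (forall r x, P x -> P (r *: x))].

Definition noetherian_tail (R : pzRingType) (M : lmodType R) (Md : int -> M -> Prop)
    (n0 : int) : Prop :=
  forall P : nat -> M -> Prop,
    (forall k, submodule (P k)) -> (forall k x, P k x -> Mge Md n0 x) ->
    (forall k x, P k x -> P k.+1 x) ->
    exists N, forall k, (N <= k)%N -> forall x, P k x -> P N x.

Definition R0_submodule (R : pzRingType) (Rd : nat -> R -> Prop) (M : lmodType R)
    (Md : int -> M -> Prop) (n : int) (P : M -> Prop) : Prop :=
  [/\ (forall x, P x -> Md n x), P 0,
      (forall x y, P x -> P y -> P (x - y)) &
      (forall r x, Rd 0%N r -> P x -> P (r *: x))].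

Definition R0_chain (R : pzRingType) (Rd : nat -> R -> Prop) (M : lmodType R)
    (Md : int -> M -> Prop) (n : int) (l : nat) (P : nat -> M -> Prop) : Prop :=
  (forall i, (i <= l)%N -> R0_submodule Rd Md n (P i)) /\
  (forall i, (i < l)%N ->
     (forall x, P i x -> P i.+1 x) /\ (exists x, P i.+1 x /\ ~ P i x)).

Definition R0_length (R : pzRingType) (Rd : nat -> R -> Prop) (M : lmodType R)
    (Md : int -> M -> Prop) (n : int) (l : nat) : Prop :=
  (exists P, R0_chain Rd Md n l P) /\
  (forall l' P, R0_chain Rd Md n l' P -> (l' <= l)%N).

Definition hilbert_polys (d : nat) (lam : int -> nat) (g : 'I_d -> {poly rat}) : Prop :=
  exists N : nat, forall n : nat, (N <= n)%N -> forall i : 'I_d,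
    (g i).[n%:R] = ((lam ((d * n + i)%N)%:Z))%:R.

(* cx = 1 + max_i deg g_i, deg 0 = -1; since size p = deg p + 1 this is
   the maximum of the sizes *)
Definition complexity (d : nat) (g : 'I_d -> {poly rat}) : nat :=
  \max_(i < d) size (g i).

Definition sgnpar (n : int) : int := if odd `|n|%N then -1 else 1.

Definition hfun (d : nat) (lam : int -> nat) (n : int) : int :=
  \sum_(i < d) sgnpar (n + i%:Z) * (lam (n + i%:Z))%:Z.

Fixpoint Delta (d : nat) (s : nat) (f : int -> int) : int -> int :=
  match s with
  | 0%N => f
  | s'.+1 => fun n => Delta d s' f (n + d%:Z) - Delta d s' f n
  end.

(* e^s(X,Y) = 0 for s = cx(X,Y):
   - if s >= 1: Delta^(s-1) h (n) = 0 for n >> 0;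
   - if s = 0: lambda^n = 0 for n << 0 (so e^0 is defined) and
     sum_n (-1)^n lambda^n = 0 (a finite sum). *)
Definition e_vanishes (d : nat) (lam : int -> nat) (s : nat) : Prop :=
  if (0 < s)%N then
    exists N : int, forall n, N <= n -> Delta d s.-1 (hfun d lam) n = 0
  else
    exists (a : int) (L : nat),
      (forall n, (n < a \/ a + L%:Z < n) -> lam n = 0%N) /\
      \sum_(k < L.+1) sgnpar (a + k%:Z) * (lam (a + k%:Z))%:Z = 0.

(* For n >> 0 the Hilbert polynomials give lambda^(dn+i) = g_i(n), and a
   nonzero g_i, taking nonnegative values, has positive leading coefficient and
   is eventually positive.  Since d is even, the d/2 vanishing values
   lambda^n, lambda^(n+2), ..., lambda^(n+d-2) with n >> 0 meet every residue
   class mod d of the parity of n, so every g_i with i of that parity is zero.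
   If cx = 0 all g_i vanish and lambda^n = 0 for n >> 0.  If s = cx > 0, then
   h(dm) = +-sum_i g_i(m), a polynomial in m of degree <= s-1 whose coefficient
   in degree s-1 is a sum of nonnegative top coefficients, one of them positive.
   Its (s-1)-st difference, which is e^s, is therefore nonzero: for s > 0 the
   hypothesis of the theorem can never hold beyond m0.  Only the Hilbert
   polynomials enter the argument, not the ring and module structure. *)

From mathcomp Require Import all_boot all_order all_algebra.
From mathcomp Require Import polyrcf zify ring.
Import Order.TTheory GRing.Theory Num.Theory.
Local Open Scope ring_scope.

Section ForwardDifference.
Variable R : comNzRingType.
Implicit Types (p : {poly R}) (c : R).

Definition diffp p : {poly R} := p \Po ('X + 1) - p.

Lemma horner_diffp p x : (diffp p).[x] = p.[x + 1] - p.[x].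
Proof. by rewrite /diffp hornerD hornerN horner_comp !hornerE. Qed.

Lemma diffpC c : diffp c%:P = 0.
Proof. by rewrite /diffp comp_polyC subrr. Qed.

Lemma diffpMXaddC p c : diffp (p * 'X + c%:P) = diffp p * ('X + 1) + p.
Proof. rewrite /diffp comp_polyD comp_polyM comp_polyX comp_polyC; ring. Qed.

Lemma size_leq_of_MXaddC p c n : (size (p * 'X + c%:P)%R <= n.+1)%N -> (size p <= n)%N.
Proof.
by have [->|/negbTE p0] := eqVneq p 0; rewrite ?size_poly0 // size_MXaddC p0 ltnS.
Qed.

Lemma size_coef_diffp {n p} : (size p <= n.+2)%N ->
  (size (diffp p) <= n.+1)%N /\ (diffp p)`_n = n.+1%:R * p`_n.+1.
Proof.
elim: n p => [|n IHn]; elim/poly_ind => [|q c _];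
  rewrite ?(diffpC 0, coef0, mulr0, size_poly0) // => /size_leq_of_MXaddC hq.
- rewrite diffpMXaddC (size1_polyC hq) diffpC mul0r add0r.
  by rewrite size_polyC_leq1 coefD coefMX !coefC /= addr0 mul1r.
- have [size_dq coef_dq] := IHn q hq; rewrite diffpMXaddC; split.
    rewrite (leq_trans (size_polyD _ _)) // geq_max hq andbT.
    by rewrite (leq_trans (size_polyMleq _ _)) // size_XaddC addn2.
  rewrite coefD mulrDr coefD mulr1 coefMX /= coef_dq (nth_default 0 size_dq) addr0.
  rewrite coefD coefMX coefC /= addr0 -[n.+2]addn1 natrD; ring.
Qed.

Lemma iter_diffp k p : (size p <= k.+1)%N -> iter k diffp p = (k`!%:R * p`_k)%:P.
Proof.
elim: k p => [|k IHk] p hp; first by rewrite /= {1}(size1_polyC hp) mul1r.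
have [size_dp coef_dp] := size_coef_diffp hp.
by rewrite iterSr IHk // coef_dp factS natrM mulrCA mulrA.
Qed.
End ForwardDifference.
Arguments diffp {R} p.

Section EventualSign.
Variable R : archiRealFieldType.
Implicit Type p : {poly R}.

Lemma natr_eventually_ge (x : R) :
  exists n : nat, forall m : nat, (n <= m)%N -> x <= m%:R.
Proof.
exists (Num.Def.archi_bound `|x|) => m hm.
rewrite (le_trans (ler_norm x)) // (le_trans (ltW (archi_boundP (normr_ge0 x)))) //.
by rewrite ler_nat.
Qed.

Lemma horner_natr_eventually_gt0 p : 0 < lead_coef p ->
  exists B : nat, forall m : nat, (B <= m)%N -> 0 < p.[m%:R].
Proof.
move=> lc_gt0; have [x0 hx0] := poly_pinfty_gt_lc lc_gt0.
have [B hB] := natr_eventually_ge x0.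
by exists B => m /hB /hx0; apply: lt_le_trans.
Qed.

Lemma lead_coef_gt0_of_horner_natr_ge0 p (A : nat) : p != 0 ->
  (forall m : nat, (A <= m)%N -> 0 <= p.[m%:R]) -> 0 < lead_coef p.
Proof.
move=> p0 p_ge0; rewrite lt_def lead_coef_eq0 p0 /=.
rewrite leNgt; apply/negP; rewrite -oppr_gt0 -lead_coefN => /horner_natr_eventually_gt0.
case=> B hB; have := hB _ (leq_maxr A B); rewrite hornerN oppr_gt0 ltNge.
by rewrite p_ge0 // leq_maxl.
Qed.
End EventualSign.

Lemma Delta_eq_iter_diffp {R : comNzRingType} {d : nat} {f : int -> int}
    {p : {poly R}} {A : nat} :
  (forall m : nat, (A <= m)%N -> (f (d * m)%N%:Z)%:~R = p.[m%:R]) ->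
  forall k m : nat, (A <= m)%N ->
    (Delta d k f (d * m)%N%:Z)%:~R = (iter k diffp p).[m%:R].
Proof.
move=> fE; elim=> [|k IHk] m hm /=; first exact: fE.
have -> : (d * m)%N%:Z + d%:Z = (d * m.+1)%N%:Z by rewrite mulnS PoszD addrC.
by rewrite intrB !IHk ?(leqW hm) // horner_diffp natr1.
Qed.

Lemma even_shift_residue {d n i : nat} : ~~ odd d -> (i < d)%N -> odd i = odd n ->
  exists j q : nat, [/\ (j < d %/ 2)%N, (n %/ d <= q)%N & (n + 2 * j = d * q + i)%N].
Proof.
move=> d_even lt_id same_parity.
have d0 : (0 < d)%N by apply: leq_ltn_trans lt_id.
have [e de] : exists e, d = (2 * e)%N.
  by exists d./2; rewrite -[d in LHS]odd_double_half (negbTE d_even) mul2n.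
have par : (i %% 2 = n %% 2)%N by rewrite !modn2 same_parity.
have dE := divn_eq n d; have lt_r := ltn_pmod n d0.
rewrite de mulKn //; move: (n %/ d)%N (n %% d)%N dE lt_r => q r dE lt_r.
have [le_ri|lt_ir] := leqP r i.
  by exists ((i - r) %/ 2)%N, q; split; nia.
by exists ((d + i - r) %/ 2)%N, q.+1; split; nia.
Qed.

Section HilbertPolynomials.
Context {d N : nat} {lam : int -> nat} {g : 'I_d -> {poly rat}}.
Hypothesis d_gt0 : (0 < d)%N.
Hypothesis gE : forall m : nat, (N <= m)%N -> forall i : 'I_d,
  (g i).[m%:R] = (lam (d * m + i)%N%:Z)%:R.

Lemma lam_eq0_of_hilb_eq0 {i : 'I_d} {m : nat} :
  g i = 0 -> (N <= m)%N -> lam (d * m + i)%N%:Z = 0%N.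
Proof.
by move=> gi0 /gE /(_ i); rewrite gi0 horner0 => /esym/eqP; rewrite pnatr_eq0 => /eqP.
Qed.

Lemma lam_eventually_eq0 : complexity g = 0%N ->
  forall k : nat, (d * N <= k)%N -> lam k%:Z = 0%N.
Proof.
move=> cx0 k hk; have g0 (i : 'I_d) : g i = 0.
  by apply/eqP; rewrite -size_poly_eq0 -leqn0 -cx0 (leq_bigmax i).
have := @lam_eq0_of_hilb_eq0 (Ordinal (ltn_pmod k d_gt0)) (k %/ d) (g0 _).
by rewrite /= mulnC -divn_eq; apply; rewrite leq_divRL // mulnC.
Qed.

Lemma hilb_lead_coef_gt0 (i : 'I_d) : g i != 0 -> 0 < lead_coef (g i).
Proof.
by move/lead_coef_gt0_of_horner_natr_ge0; apply=> m /gE ->; rewrite ler0n.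
Qed.

Lemma hilb_eq0_of_lam_eq0 : exists B : nat, forall (i : 'I_d) (q : nat),
  (B <= q)%N -> lam (d * q + i)%N%:Z = 0%N -> g i = 0.
Proof.
have eventually_pos (i : 'I_d) : exists B : nat, forall q : nat, (B <= q)%N ->
    g i = 0 \/ 0 < (g i).[q%:R].
  have [gi0|/hilb_lead_coef_gt0/horner_natr_eventually_gt0 [B hB]] := eqVneq (g i) 0.
    by exists 0%N; left.
  by exists B; right; apply: hB.
have [B hB] := fin_all_exists eventually_pos.
exists (maxn N (\max_i B i)) => i q; rewrite geq_max => /andP[hN hBq] lam0.
have [//|] := hB i q (leq_trans (leq_bigmax i) hBq).
by rewrite gE // lam0 ltxx.
Qed.

Lemma sum_top_coef_gt0 : (0 < complexity g)%N ->
  0 < \sum_i (g i)`_(complexity g).-1.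
Proof.
set s := complexity g => s_gt0.
have top_coef_gt0 (i : 'I_d) : size (g i) = s -> 0 < (g i)`_s.-1.
  move=> szi; rewrite -szi -lead_coefE hilb_lead_coef_gt0 //.
  by rewrite -size_poly_eq0 szi -lt0n.
have top_coef_ge0 (i : 'I_d) : 0 <= (g i)`_s.-1.
  have := leq_bigmax (F := fun i => size (g i)) i.
  rewrite -/(complexity g) -/s leq_eqVlt => /orP[/eqP/top_coef_gt0/ltW //|lt_s].
  by rewrite nth_default // -ltnS prednK.
have card_gt0 : (0 < #|'I_d|)%N by rewrite card_ord.
have [i0 i0_max] := bigop.eq_bigmax (fun i : 'I_d => size (g i)) card_gt0.
by rewrite (bigD1 i0) //= ltr_pwDl ?sumr_ge0 // top_coef_gt0.
Qed.

Hypothesis d_even : ~~ odd d.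

Lemma hilb_eq0_of_parity_vanishing : exists M : nat, forall n : nat,
  (d * M <= n)%N -> (forall j : nat, (j < d %/ 2)%N -> lam (n%:Z + (2 * j)%N%:Z) = 0%N) ->
  forall i : 'I_d, odd i = odd n -> g i = 0.
Proof.
have [B hB] := hilb_eq0_of_lam_eq0; exists B => n hn lam0 i same_parity.
have [j [q [lt_j le_q nE]]] := even_shift_residue d_even (ltn_ord i) same_parity.
apply: (hB i q); last by rewrite -nE PoszD lam0.
by rewrite (leq_trans _ le_q) // leq_divRL // mulnC.
Qed.

Lemma hfun_of_parity_vanishing {b : bool} : (forall i : 'I_d, odd i = b -> g i = 0) ->
  forall m : nat, (N <= m)%N ->
  (hfun d lam (d * m)%N%:Z)%:~R = (if b then 1 else -1) * \sum_i (g i).[m%:R] :> rat.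
Proof.
move=> g0 m hm; rewrite /hfun rmorph_sum mulr_sumr; apply: eq_bigr => i _.
rewrite -PoszD /sgnpar /= oddD oddM (negbTE d_even) /=.
have [par|par] := eqVneq (odd i) b.
  by rewrite (lam_eq0_of_hilb_eq0 (g0 i par) hm) g0 // horner0 !mulr0.
by rewrite intrM gE //; case: (odd i) b g0 par => [] [].
Qed.

Lemma Delta_hfun_neq0 {b : bool} : (0 < complexity g)%N ->
  (forall i : 'I_d, odd i = b -> g i = 0) ->
  forall m : nat, (N <= m)%N -> Delta d (complexity g).-1 (hfun d lam) (d * m)%N%:Z != 0.
Proof.
set s := complexity g => s_gt0 g0 m hm.
set G := (if b then 1 else -1) *: \sum_i g i.
have hfunE (m' : nat) : (N <= m')%N -> (hfun d lam (d * m')%N%:Z)%:~R = G.[m'%:R].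
  by move=> hm'; rewrite (hfun_of_parity_vanishing g0) // hornerZ horner_sum.
have size_G : (size G <= s.-1.+1)%N.
  by rewrite prednK // (leq_trans (size_scale_leq _ _)) // size_sum.
rewrite -(intr_eq0 rat) (Delta_eq_iter_diffp hfunE) // iter_diffp // hornerC.
rewrite coefZ coef_sum !mulf_neq0 //.
- by rewrite pnatr_eq0 -lt0n fact_gt0.
- by case: ifP; rewrite ?oppr_eq0 oner_eq0.
- by rewrite gt_eqF ?sum_top_coef_gt0.
Qed.
End HilbertPolynomials.

Theorem theorem6p11
    (d : nat) (Hd2 : (2 <= d)%N) (Hdeven : ~~ odd d)
    (R : pzRingType) (Rd : nat -> R -> Prop)
    (HR : graded_ring Rd) (HRc : graded_commutative Rd)
    (HRnoeth : noetherian_ring R) (HRgen : generated_in_degree Rd d)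
    (M : lmodType R) (Md : int -> M -> Prop) (HM : graded_module Rd Md)
    (Hnoeth : exists n0 : int, noetherian_tail Md n0)
    (lam : int -> nat) (Hlam : forall n : int, R0_length Rd Md n (lam n))
    (g : 'I_d -> {poly rat}) (Hg : hilbert_polys lam g)
    (He : e_vanishes d lam (complexity g)) :
  exists m0 : int, forall n : int, m0 <= n ->
    (forall j : nat, (j < d %/ 2)%N -> lam (n + (2 * j)%N%:Z) = 0%N) ->
    forall k : int, m0 <= k -> lam k = 0%N.
Proof.
have d_gt0 : (0 < d)%N := ltnW Hd2.
have [N gE] := Hg.
have [cx0|cx_gt0] := posnP (complexity g).
  exists (d * N)%N%:Z => _ _ _ [k|//] hk.
  by apply: (lam_eventually_eq0 d_gt0 gE cx0); rewrite -lez_nat.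
move: He; rewrite /e_vanishes cx_gt0 => -[N2 Delta_eq0].
have [B hB] := hilb_eq0_of_parity_vanishing d_gt0 gE Hdeven.
set m := maxn (maxn N B) `|N2|%N.
exists (d * m)%N%:Z => -[n|//] hn vanish k _; exfalso.
rewrite lez_nat in hn.
have le_Nm : (N <= m)%N by rewrite /m; lia.
have le_Bn : (d * B <= n)%N by rewrite /m in hn; nia.
have le_N2 : N2 <= (d * m)%N%:Z.
  by rewrite (le_trans (ler_norm N2)) // -abszE lez_nat /m; nia.
have := Delta_hfun_neq0 d_gt0 gE Hdeven cx_gt0 (hB n le_Bn vanish) _ le_Nm.
by rewrite Delta_eq0 ?eqxx.
Qed.
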